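(* ($I\Sigma_1$) Let $X\subseteq\mathbb{N}$ be finite, $\omega^{n+1}$-large and $\omega^3$-sparse, and let $c\in\mathbb{N}$ satisfy $4^{c^2}\le\min X$. Then: (1) for every finite $\bar X\subseteq\mathbb{N}$ with $|\bar X|\le c$ and $\max\bar X<\min X$, and every coloring $P:[\bar X\cup X]^2\to\{0,\dots,c-1\}$, there is an $\omega^n$-large $Y\subseteq X$ such that $P(x,y)=P(x,y')$ for all $x\in\bar X$ and $y,y'\in Y$; (2) for every finite $\bar X\subseteq\mathbb{N}$ with $|\bar X|\le c$ and $\max X<\min\bar X$, and every coloring $P:[X\cup\bar X]^2\to\{0,\dots,c-1\}$, there is an $\omega^n$-large $Y\subseteq X$ such that $P(y,x)=P(y',x)$ for all $x\in\bar X$ and $y,y'\in Y$.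
   Context: $\alpha$-largeness for $\alpha<\omega^\omega$: writing ordinals in Cantor normal form, $0[m]=0$, $(\beta+1)[m]=\beta$, $(\beta+\omega^n)[m]=\beta+\omega^{n-1}\cdot m$ for $n\ge1$; a finite $\{x_0<\dots<x_{\ell-1}\}$ is $\alpha$-large if $\alpha[x_0]\cdots[x_{\ell-1}]=0$. $X$ is \emph{$\alpha$-sparse} if $\min X>3$ and for all $x<y$ in $X$ the interval $[x,y)$ is $\alpha$-large. *)

From mathcomp Require Import all_boot.
Set Implicit Arguments. Unset Strict Implicit. Unset Printing Implicit Defensive.

(* Ordinals below omega^omega in Cantor normal form:
   the list [:: e1; ...; ek] with e1 >= ... >= ek denotes
   omega^e1 + ... + omega^ek; [::] denotes 0. *)
Definition ord_ww := seq nat.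

Definition is_cnf (a : ord_ww) : bool := sorted geq a.

Definition omega_pow (n : nat) : ord_ww := [:: n].

(* fundamental sequence: 0[m] = 0, (b+1)[m] = b,
   (b + omega^(e+1))[m] = b + omega^e * m *)
Definition fund (a : ord_ww) (m : nat) : ord_ww :=
  match rev a with
  | [::] => [::]
  | 0 :: rb => rev rb
  | e.+1 :: rb => rev rb ++ nseq m e
  end.

(* a finite set {x0 < ... < x_{l-1}} is represented by its strictly
   increasing enumeration *)
Definition is_fin_set (s : seq nat) : bool := sorted ltn s.

Definition large (a : ord_ww) (s : seq nat) : bool :=
  foldl fund a s == [::].

Definition interval (x y : nat) : seq nat := iota x (y - x).

Definition sparse (a : ord_ww) (X : seq nat) : bool :=
  (3 < head 0 X) &&
  all (fun x => all (fun y => (x < y) ==> large a (interval x y)) X) X.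

(* Colour every y in X by the tuple (P(x,y))_{x in Xb}: there are at most
   c^|Xb| <= 4^(c^2) <= min X colours.  If X = {x0} u X', then X' is
   (omega^n * x0)-large, and a pigeonhole principle for natural sums of ordinals
   gives an omega^n-large colour class.

   For the pigeonhole principle, ordinals below omega^omega are read as
   multisets of exponents of omega, and the fundamental sequence of the whole
   set is run alongside those of the colour classes.  The invariant is that the
   exponents of the whole ordinal reduce to the union of the exponents of the
   classes: the latter arise by deleting exponents and trading omega^(a+1) for
   omega^a * j, where j is bounded by the elements seen so far.  Stepping the
   least exponent of the whole ordinal with a new element y keeps this
   invariant, whichever class y belongs to. *)

From mathcomp Require Import all_boot zify.
Set Implicit Arguments. Unset Strict Implicit. Unset Printing Implicit Defensive.

(* [rem] subterms are frozen so that [/=] cannot unfold them. *)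
Ltac perm_count :=
  apply/permP => p;
  repeat match goal with H : is_true (perm_eq _ _) |- _ => move/permP/(_ p): H end;
  rewrite -?cats1;
  repeat match goal with |- context [rem ?x ?s] => let r := fresh "r" in set r := rem x s end;
  repeat progress rewrite /= ?count_cat; lia.

Lemma perm_rem_cons (T : eqType) (x : T) s t : perm_eq s (x :: t) -> perm_eq (rem x s) t.
Proof.
move=> st; have xs : x \in s by rewrite (perm_mem st) mem_head.
have e := perm_to_rem xs; rewrite perm_sym in e.
by have := perm_trans e st; rewrite perm_cons.
Qed.

Lemma perm_rem_cat (T : eqType) (x : T) s d :
  x \in d -> perm_eq (rem x (s ++ d)) (s ++ rem x d).
Proof. by move/perm_to_rem => e; apply: perm_rem_cons; perm_count. Qed.

Lemma perm_flatten_set_nth (T : eqType) (bs : seq (seq T)) i s : i < size bs ->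
  perm_eq (flatten (set_nth [::] bs i s) ++ nth [::] bs i) (flatten bs ++ s).
Proof.
elim: bs i => [|b bs IH] [|i] //= ilt; first by perm_count.
by have e := IH i ilt; perm_count.
Qed.

Lemma large_nil s : large [::] s.
Proof. by elim: s. Qed.

Lemma fund_omega_pow0 y : fund (omega_pow 0) y = [::].
Proof. by []. Qed.

Lemma fund_omega_powS e y : fund (omega_pow e.+1) y = nseq y e.
Proof. by []. Qed.

Lemma fund_rcons h m y : fund (rcons h m) y = h ++ fund (omega_pow m) y.
Proof. by rewrite /fund rev_rcons revK; case: m; rewrite /= ?cats0. Qed.

Lemma geq_trans : transitive geq.
Proof. by move=> a b c /= ba cb; apply: leq_trans cb ba. Qed.

Lemma is_cnf_rcons h m : is_cnf (rcons h m) = is_cnf h && all (geq^~ m) h.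
Proof. by rewrite /is_cnf !(sorted_pairwise geq_trans) pairwise_rcons andbC. Qed.

Lemma is_cnf_nseq k e : is_cnf (nseq k e).
Proof. by elim: k => [|[|k] IH] //=; rewrite leqnn. Qed.

Lemma is_cnf_fund a y : is_cnf a -> is_cnf (fund a y).
Proof.
case/lastP: a => [|h m] //; rewrite fund_rcons is_cnf_rcons => /andP [hs hm].
rewrite /is_cnf in hs.
rewrite /is_cnf (sorted_pairwise geq_trans) pairwise_cat -(sorted_pairwise geq_trans) hs.
case: m hm => [|m] hm; first by rewrite fund_omega_pow0 allrel0r.
rewrite fund_omega_powS; apply/andP; split.
  by apply/allrelP => a b /(allP hm) ma; rewrite mem_nseq => /andP [_ /eqP ->]; exact: ltnW.
by rewrite -(sorted_pairwise geq_trans); exact: is_cnf_nseq.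
Qed.

Inductive reduces (K : nat) (g : seq nat) : seq nat -> Prop :=
| reduces_refl : reduces K g g
| reduces_perm d d' : perm_eq d d' -> reduces K g d -> reduces K g d'
| reduces_drop a d : reduces K g (a :: d) -> reduces K g d
| reduces_split a j d : j <= K -> reduces K g (a.+1 :: d) -> reduces K g (nseq j a ++ d).

Section Reduces.
Variable K : nat.

Lemma reduces_trans g d e : reduces K g d -> reduces K d e -> reduces K g e.
Proof.
move=> gd; elim=> // [d1 d2 p _|a d1 _|a j d1 jK _].
- exact: reduces_perm.
- exact: reduces_drop.
- exact: reduces_split.
Qed.

Lemma reduces_perml g g' d : perm_eq g g' -> reduces K g d -> reduces K g' d.
Proof. by rewrite perm_sym => gg; apply: reduces_trans (reduces_perm gg (reduces_refl _ _)). Qed.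

Lemma reduces_nil d : reduces K [::] d -> d = [::].
Proof.
elim=> [|d1 d2 + _ e|a d1 _|a j d1 _ _] //.
by rewrite e perm_sym => /perm_nilP.
Qed.

Lemma reduces_dropl s d : reduces K (s ++ d) d.
Proof.
elim: s => [|a s IH]; first exact: reduces_refl.
exact: reduces_trans (reduces_drop (reduces_refl _ _)) IH.
Qed.

Lemma reduces_lower a b d : 0 < K -> b <= a -> reduces K (a :: d) (b :: d).
Proof.
move=> K0; elim: a => [|a IH]; first by rewrite leqn0 => /eqP ->; apply: reduces_refl.
rewrite leq_eqVlt => /predU1P [-> | ba]; first exact: reduces_refl.
exact: reduces_trans (reduces_split K0 (reduces_refl _ _)) (IH ba).
Qed.

Lemma reduces_cons_fund a d y : y <= K -> reduces K (a :: d) (fund (omega_pow a) y ++ d).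
Proof.
case: a => [|a] yK; first exact: reduces_drop (reduces_refl _ _).
exact: reduces_split yK (reduces_refl _ _).
Qed.

End Reduces.

Lemma reduces_fund K y h m d x :
  K <= y -> all (geq^~ m) h -> reduces K (rcons h m) d -> x \in d ->
  reduces y.+1 (h ++ fund (omega_pow m) y) (rem x d ++ fund (omega_pow x) y).
Proof.
move=> Ky hm rd; elim: rd x => [|s s' ss' _ IH|a s _ IH|a j s jK _ IH] x xs.
- set F := fund (omega_pow m) y.
  have [-> | xm] := eqVneq x m.
    apply: reduces_perm (reduces_refl _ _); rewrite perm_cat2r perm_sym.
    by apply: perm_rem_cons; rewrite perm_rcons.
  have xh : x \in h by move: xs; rewrite mem_rcons inE (negbTE xm).
  have mx : m < x by rewrite ltn_neqAle eq_sym xm (allP hm x xh : m <= x).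
  case: x xm xs xh mx => // x _ _ xh mx; rewrite fund_omega_powS.
  (* split [x+1] into [y+1] copies of [x] and lower one of them to [m] *)
  have hx := perm_to_rem xh; set r := rem x.+1 h in hx.
  have rx : perm_eq (rem x.+1 (rcons h m)) (m :: r) by apply: perm_rem_cons; perm_count.
  have e1 : reduces y.+1 (h ++ F) (nseq y.+1 x ++ (r ++ F)).
    by apply: reduces_split => //; apply: reduces_perm (reduces_refl _ _); perm_count.
  have e2 : reduces y.+1 (h ++ F) (m :: (nseq y x ++ r ++ F)).
    exact: reduces_trans e1 (reduces_lower _ (ltn0Sn y) (mx : m <= x)).
  have e3 : reduces y.+1 (h ++ F) (m :: nseq y x ++ r).
    by apply: reduces_trans e2 (reduces_perml _ (reduces_dropl _ F _)); perm_count.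
  by apply: reduces_perm e3; perm_count.
- have xs0 : x \in s by rewrite (perm_mem ss').
  apply: reduces_perm (IH x xs0); rewrite perm_cat2r.
  exact/perm_rem_cons/(perm_trans ss' (perm_to_rem xs)).
- have := IH x; rewrite inE xs orbT => /(_ isT) e.
  apply: (reduces_drop (a := a)); apply: reduces_perm e.
  by have e' := perm_rem_cat [:: a] xs; perm_count.
- have jy : j <= y.+1 by rewrite leqW // (leq_trans jK Ky).
  have [xs0 | xns] := boolP (x \in s).
    have := IH x; rewrite inE xs0 orbT => /(_ isT) e.
    have ea := perm_rem_cat [:: a.+1] xs0; rewrite !cat1s in ea.
    have ej := perm_rem_cat (nseq j a) xs0.
    apply: reduces_perm (reduces_split (a := a) (d := rem x s ++ fund (omega_pow x) y) jy
                           (reduces_perm _ e)); by perm_count.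
  (* [x] is a new copy of [a]: expand an [a] coming from the expansion of [a+1] instead *)
  move: xs; rewrite mem_cat (negbTE xns) orbF mem_nseq => /andP [j0 /eqP ->].
  have := IH a.+1 (mem_head _ _); rewrite /= eqxx fund_omega_powS => hd.
  case: j j0 jK {jy} => // j _ jK; rewrite /= eqxx.
  have ey : nseq y a = a :: nseq (y.-1 - j) a ++ nseq j a.
    by rewrite -nseqD -[RHS]/(nseq _.+1 a); congr nseq; lia.
  rewrite ey in hd; set extra := nseq (y.-1 - j) a in hd *.
  have e1 : reduces y.+1 (h ++ fund (omega_pow m) y) (a :: extra ++ nseq j a ++ s).
    by apply: reduces_perm hd; perm_count.
  have e2 := reduces_trans e1 (reduces_cons_fund _ _ (leqnSn y)).
  have e3 : reduces y.+1 (h ++ fund (omega_pow m) y) (nseq j a ++ s ++ fund (omega_pow a) y).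
    by apply: reduces_trans e2 (reduces_perml _ (reduces_dropl _ extra _)); perm_count.
  by apply: reduces_perm e3; perm_count.
Qed.

Lemma large_pigeonhole K g (bs : seq (seq nat)) (f : nat -> nat) X :
  is_fin_set X -> is_cnf g -> 0 < size bs ->
  {in X, forall x, K <= x /\ f x < size bs} ->
  reduces K g (flatten bs) -> large g X ->
  exists2 i, i < size bs & large (nth [::] bs i) [seq x <- X | f x == i].
Proof.
elim: X K g bs => [|y X IH] K g bs sX cg bs0 hX rg.
  move/eqP=> /= g0; move: rg; rewrite g0 => /reduces_nil.
  by case: bs bs0 {hX} => [|[|b bs] bs'] // _ _; exists 0.
have [Ky fy] := hX y (mem_head _ _); set i := f y in fy *.
case Eb: (nth [::] bs i) / (lastP (nth [::] bs i)) => [|hb mb].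
  by exists i; rewrite //= eqxx Eb large_nil.
have mbs : mb \in flatten bs.
  by apply/flattenP; exists (nth [::] bs i); [exact: mem_nth | rewrite Eb mem_rcons mem_head].
case/lastP: g cg rg => [|h m] cg rg; first by move/reduces_nil: rg mbs => ->.
move: (cg); rewrite is_cnf_rcons => /andP [_ hm] hl.
set bs' := set_nth [::] bs i (fund (nth [::] bs i) y).
have sz : size bs' = size bs by rewrite size_set_nth; apply/maxn_idPr.
have rg' : reduces y.+1 (fund (rcons h m) y) (flatten bs').
  rewrite fund_rcons; apply: reduces_perm (reduces_fund Ky hm rg mbs).
  have e1 := perm_flatten_set_nth (fund (nth [::] bs i) y) fy.
  have e2 := perm_to_rem mbs.
  by rewrite /bs' Eb fund_rcons in e1 *; perm_count.
have sX' : is_fin_set X := path_sorted sX.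
have yX : all (ltn y) X := order_path_min ltn_trans sX.
have hX' : {in X, forall x, y.+1 <= x /\ f x < size bs'}.
  move=> x xX; rewrite sz; split; first exact: (allP yX).
  by case: (hX x); rewrite // inE xX orbT.
have bs0' : 0 < size bs' by rewrite sz.
have [j jl hj] := IH _ _ _ sX' (is_cnf_fund y cg) bs0' hX' rg' hl.
exists j; first by rewrite -sz.
by move: hj; rewrite /bs' nth_set_nth /=; case: (eqVneq j i) => [-> | _] //=.
Qed.

Lemma large_omega_pow_pigeonhole n (T : eqType) (col : nat -> T) (cs : seq T) X :
  is_fin_set X -> large (omega_pow n.+1) X -> size cs <= head 0 X ->
  {in X, forall y, col y \in cs} ->
  exists Y : seq nat, [/\ is_fin_set Y, {subset Y <= X}, large (omega_pow n) Y &
    {in Y &, forall y y', col y = col y'}].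
Proof.
case: X => [|x0 X] // sX hl hcs hcol.
have sub : {subset X <= x0 :: X} by move=> z zX; rewrite inE zX orbT.
have flat : flatten (nseq x0 [:: n]) = nseq x0 n by elim: (x0) => //= k ->.
set f := fun y => index (col y) cs.
have cs0 : 0 < size cs by have := hcol x0 (mem_head _ _); case: (cs).
have bs0 : 0 < size (nseq x0 [:: n]) by rewrite size_nseq (leq_trans cs0 hcs).
have hX : {in X, forall x, 0 <= x /\ f x < size (nseq x0 [:: n])}.
  move=> x xX; split => //; rewrite size_nseq (leq_trans _ hcs) // index_mem.
  exact/hcol/sub.
have red : reduces 0 (nseq x0 n) (flatten (nseq x0 [:: n])) by rewrite flat; apply: reduces_refl.
have [i il hi] := large_pigeonhole (path_sorted sX) (is_cnf_nseq x0 n) bs0 hX red hl.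
exists [seq x <- X | f x == i]; split.
- exact: (sorted_filter ltn_trans _ (path_sorted sX)).
- by move=> x; rewrite mem_filter => /andP [_ /sub].
- by move: hi; rewrite nth_nseq -(size_nseq x0 [:: n]) il.
move=> y y'; rewrite !mem_filter => /andP [/eqP fy yX] /andP [/eqP fy' y'X].
have e := nth_index (col y) (hcol y (sub _ yX)).
have e' := nth_index (col y) (hcol y' (sub _ y'X)).
by rewrite -[col y]e -[col y']e' -/(f y) -/(f y') fy fy'.
Qed.

Fixpoint words (c s : nat) : seq (seq nat) :=
  if s is s'.+1 then [seq a :: w | a <- iota 0 c, w <- words c s'] else [:: [::]].

Lemma size_words c s : size (words c s) = c ^ s.
Proof. by elim: s => //= s IH; rewrite size_allpairs size_iota IH expnS. Qed.

Lemma mem_words c w : all (gtn c) w -> w \in words c (size w).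
Proof.
elim: w => [|a w IH] //= /andP [ac wc].
by apply: allpairs_f; [rewrite mem_iota | exact: IH].
Qed.

Lemma large_homogeneous_subset n c X Xb (Q : nat -> nat -> nat) :
  is_fin_set X -> large (omega_pow n.+1) X -> c ^ size Xb <= head 0 X ->
  (forall x y, x \in Xb -> y \in X -> Q x y < c) ->
  exists Y : seq nat, [/\ is_fin_set Y, {subset Y <= X}, large (omega_pow n) Y &
    forall x y y', x \in Xb -> y \in Y -> y' \in Y -> Q x y = Q x y'].
Proof.
move=> sX hl hc hQ.
have hcol : {in X, forall y, [seq Q x y | x <- Xb] \in words c (size Xb)}.
  move=> y yX; rewrite -(size_map (Q^~ y)); apply: mem_words.
  by apply/allP => _ /mapP [x xXb ->]; exact: hQ.
have [|Y [sY YX hY hom]] := large_omega_pow_pigeonhole sX hl _ hcol.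
  by rewrite size_words.
exists Y; split => // x y y' xXb yY y'Y.
by move/eq_in_map: (hom y y' yY y'Y); apply.
Qed.

Lemma expn_le_pow4_sq c s : s <= c -> c ^ s <= 4 ^ (c ^ 2).
Proof.
case: c => [|c sc]; first by rewrite leqn0 => /eqP ->.
rewrite (leq_trans (leq_pexp2l _ sc)) // expnM leq_exp2r //.
exact: ltnW (ltn_expl _ _).
Qed.

Theorem mainTheorem17 (n : nat) (X : seq nat) (c : nat) :
  is_fin_set X ->
  large (omega_pow n.+1) X ->
  sparse (omega_pow 3) X ->
  4 ^ (c ^ 2) <= head 0 X ->
  (forall (Xb : seq nat) (P : nat -> nat -> nat),
     is_fin_set Xb -> size Xb <= c ->
     (forall x y, x \in Xb -> y \in X -> x < y) ->
     (forall x y, x \in Xb ++ X -> y \in Xb ++ X -> x < y -> P x y < c) ->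
     exists Y : seq nat,
       [/\ is_fin_set Y, {subset Y <= X}, large (omega_pow n) Y &
        forall x y y', x \in Xb -> y \in Y -> y' \in Y -> P x y = P x y'])
  /\
  (forall (Xb : seq nat) (P : nat -> nat -> nat),
     is_fin_set Xb -> size Xb <= c ->
     (forall y x, y \in X -> x \in Xb -> y < x) ->
     (forall x y, x \in X ++ Xb -> y \in X ++ Xb -> x < y -> P x y < c) ->
     exists Y : seq nat,
       [/\ is_fin_set Y, {subset Y <= X}, large (omega_pow n) Y &
        forall x y y', x \in Xb -> y \in Y -> y' \in Y -> P y x = P y' x]).
Proof.
move=> sX hl _ hc.
have bound s : s <= c -> c ^ s <= head 0 X by move/expn_le_pow4_sq/leq_trans; apply.
split=> Xb P _ hs hlt hP.
- apply: (large_homogeneous_subset (Q := P) sX hl (bound _ hs)) => x y xXb yX.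
  by apply: hP; rewrite ?mem_cat ?xXb ?yX ?orbT //; exact: hlt.
- apply: (large_homogeneous_subset (Q := fun x y => P y x) sX hl (bound _ hs)) => x y xXb yX.
  by apply: hP; rewrite ?mem_cat ?xXb ?yX ?orbT //; exact: hlt.
Qed.
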